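(* Let $K$ be a nonempty, compact and convex subset of a real Hausdorff locally convex topological vector space $X$, let $Y$ be an arbitrary nonempty set and let $U\subseteq K$ be dense in $K$. Let $f:K\times Y\to\mathbb R$ satisfy: (i) for every $y\in Y$ the map $x\mapsto f(x,y)$ is convex on $K$; (ii) $f$ is concavelike on $Y$, i.e. for all $y_1,y_2\in Y$, $t\in[0,1]$ there exists $y_3\in Y$ with $f(x,y_3)\ge(1-t)f(x,y_1)+tf(x,y_2)$ for all $x\in K$; (iii) the family $(f(\cdot,y))_{y\in Y}$ is an equicontinuous family in $C(K)$; (iv) $\sup_{y\in Y}f(x,y)<\infty$ for every $x\in K$. Then $$\inf_{x\in U}\sup_{y\in Y}f(x,y)=\sup_{y\in Y}\inf_{x\in U}f(x,y).$$
   Context: $C(K)$ is the set of continuous real-valued functions on $K$. A family $S\subseteq C(K)$ is equicontinuous if for every $x\in K$ and $\varepsilon>0$ there is a neighborhood $U_x$ of $x$ such that $|h(z)-h(x)|<\varepsilon$ for all $z\in U_x\cap K$ and all $h\in S$. *)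

From Stdlib Require Import Reals List ClassicalEpsilon.
Open Scope R_scope.

Record LCTVS := {
  pt :> Type;
  vadd : pt -> pt -> pt;
  vscal : R -> pt -> pt;
  vzero : pt;
  vopp : pt -> pt;
  vadd_assoc : forall x y z, vadd x (vadd y z) = vadd (vadd x y) z;
  vadd_comm : forall x y, vadd x y = vadd y x;
  vadd_zero : forall x, vadd x vzero = x;
  vadd_opp : forall x, vadd x (vopp x) = vzero;
  vscal_one : forall x, vscal 1 x = x;
  vscal_assoc : forall a b x, vscal a (vscal b x) = vscal (a * b) x;
  vscal_distr_v : forall a x y, vscal a (vadd x y) = vadd (vscal a x) (vscal a y);
  vscal_distr_s : forall a b x, vscal (a + b) x = vadd (vscal a x) (vscal b x);
  is_open : (pt -> Prop) -> Prop;
  open_full : is_open (fun _ => True);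
  open_inter : forall A B, is_open A -> is_open B -> is_open (fun x => A x /\ B x);
  open_union : forall (I : Type) (F : I -> pt -> Prop),
      (forall i, is_open (F i)) -> is_open (fun x => exists i, F i x);
  vadd_cont : forall x y W, is_open W -> W (vadd x y) ->
      exists A B, is_open A /\ is_open B /\ A x /\ B y /\
        (forall u v, A u -> B v -> W (vadd u v));
  vscal_cont : forall a x W, is_open W -> W (vscal a x) ->
      exists d A, d > 0 /\ is_open A /\ A x /\
        (forall b u, Rabs (b - a) < d -> A u -> W (vscal b u));
  hausdorff : forall x y, x <> y ->
      exists A B, is_open A /\ is_open B /\ A x /\ B y /\
        (forall z, ~ (A z /\ B z));
  loc_convex : forall W, is_open W -> W vzero ->
      exists V, is_open V /\ V vzero /\ (forall z, V z -> W z) /\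
        (forall u v t, V u -> V v -> 0 <= t <= 1 ->
           V (vadd (vscal (1 - t) u) (vscal t v)))
}.

Arguments vadd {_}. Arguments vscal {_}. Arguments is_open {_}.

Section Notions.
Context {X : LCTVS}.

Definition convex_set (K : X -> Prop) : Prop :=
  forall x y t, K x -> K y -> 0 <= t <= 1 ->
    K (vadd (vscal (1 - t) x) (vscal t y)).

Definition compact_set (K : X -> Prop) : Prop :=
  forall (I : Type) (F : I -> X -> Prop), (forall i, is_open (F i)) ->
    (forall x, K x -> exists i, F i x) ->
    exists l : list I, forall x, K x -> exists i, In i l /\ F i x.

Definition dense_in (U K : X -> Prop) : Prop :=
  (forall x, U x -> K x) /\
  (forall W, is_open W -> (exists x, K x /\ W x) -> exists u, U u /\ W u).

Definition convex_on (K : X -> Prop) (g : X -> R) : Prop :=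
  forall x y t, K x -> K y -> 0 <= t <= 1 ->
    g (vadd (vscal (1 - t) x) (vscal t y)) <= (1 - t) * g x + t * g y.

Definition equicontinuous_on {Y : Type} (K : X -> Prop) (f : X -> Y -> R) : Prop :=
  forall x eps, K x -> eps > 0 ->
    exists V, is_open V /\ V x /\
      forall z y, V z -> K z -> Rabs (f z y - f x y) < eps.

End Notions.

Inductive ER := Fin (r : R) | PInf | MInf.

Definition ERle (a b : ER) : Prop :=
  match a, b with
  | MInf, _ => True
  | _, PInf => True
  | Fin x, Fin y => x <= y
  | _, _ => False
  end.

Definition is_ER_lub (S : ER -> Prop) (v : ER) : Prop :=
  (forall w, S w -> ERle w v) /\ (forall u, (forall w, S w -> ERle w u) -> ERle v u).
Definition is_ER_glb (S : ER -> Prop) (v : ER) : Prop :=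
  (forall w, S w -> ERle v w) /\ (forall u, (forall w, S w -> ERle u w) -> ERle u v).

(* The (unique, existing) least upper / greatest lower bound in [-oo,+oo]. *)
Definition ERsup (S : ER -> Prop) : ER := epsilon (inhabits PInf) (is_ER_lub S).
Definition ERinf (S : ER -> Prop) : ER := epsilon (inhabits PInf) (is_ER_glb S).

From Stdlib Require Import Reals List ClassicalEpsilon Lra Classical.
Open Scope R_scope.

(* Only the inequality  inf_U sup_Y f <= sup_Y inf_U f  needs work.  Fix b below
   the left-hand side.  By density and equicontinuity every x in K has some y with
   f(x,y) > b, and the sets where this holds are open, so by compactness finitely
   many y_1, ..., y_n suffice.  These are merged into a single y_0 with
   f(., y_0) >= b on K, one at a time: on the convex set C where the first k - 1
   fail, max(f(., y') - b, f(., y_k) - b) >= 0 for the y' already obtained, and a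
   two-function minimax lemma for convex functions yields a convex combination of
   the two that is nonnegative on C, which concavelikeness realises by one y. *)

Lemma ERle_trans a b c : ERle a b -> ERle b c -> ERle a c.
Proof. destruct a, b, c; simpl; intros; try lra; tauto. Qed.

Lemma ERle_antisym a b : ERle a b -> ERle b a -> a = b.
Proof. destruct a, b; simpl; intros; try tauto; f_equal; lra. Qed.

Definition ERopp (a : ER) : ER :=
  match a with Fin r => Fin (- r) | PInf => MInf | MInf => PInf end.

Lemma ERoppK a : ERopp (ERopp a) = a.
Proof. destruct a; simpl; auto; f_equal; ring. Qed.

Lemma ERle_opp a b : ERle a b -> ERle (ERopp b) (ERopp a).
Proof. destruct a, b; simpl; intros; try lra; tauto. Qed.

Lemma ER_lub_exists (S : ER -> Prop) : exists v, is_ER_lub S v.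
Proof.
  destruct (classic (S PInf \/ ~ exists M, forall r, S (Fin r) -> r <= M))
    as [Hunb | Hbd].
  - exists PInf; split; [intros w _; destruct w; exact I |].
    intros u Hu; destruct Hunb as [HP | HnB]; [exact (Hu _ HP) |].
    destruct u as [r | |]; simpl; [| exact I |].
    + apply HnB; exists r; intros r' Hr'; exact (Hu _ Hr').
    + apply HnB; exists 0; intros r' Hr'; destruct (Hu _ Hr').
  - apply not_or_and in Hbd; destruct Hbd as [HnP [M HM]%NNPP].
    destruct (classic (exists r, S (Fin r))) as [[r0 Hr0] | Hempty].
    + destruct (completeness (fun r => S (Fin r))) as [m [Hub Hlub]];
        [exists M; exact HM | exists r0; exact Hr0 |].
      exists (Fin m); split.
      * intros [r | |] Hw; simpl; [exact (Hub _ Hw) | exact (HnP Hw) | exact I].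
      * intros [r | |] Hu; simpl; [| exact I | exact (Hu _ Hr0)].
        apply Hlub; intros x Hx; exact (Hu _ Hx).
    + exists MInf; split; [| intros; exact I].
      intros [r | |] Hw; [exfalso; eauto | exact (HnP Hw) | exact I].
Qed.

Lemma ER_glb_exists (S : ER -> Prop) : exists v, is_ER_glb S v.
Proof.
  destruct (ER_lub_exists (fun w => S (ERopp w))) as [v [Hub Hlub]].
  exists (ERopp v); split.
  - intros w Hw; rewrite <- (ERoppK w); apply ERle_opp, Hub; rewrite ERoppK; exact Hw.
  - intros u Hu; rewrite <- (ERoppK u); apply ERle_opp, Hlub.
    intros w Hw; rewrite <- (ERoppK w); apply ERle_opp, Hu; exact Hw.
Qed.

Lemma ERsup_spec S : is_ER_lub S (ERsup S).
Proof. unfold ERsup; apply epsilon_spec, ER_lub_exists. Qed.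

Lemma ERinf_spec S : is_ER_glb S (ERinf S).
Proof. unfold ERinf; apply epsilon_spec, ER_glb_exists. Qed.

Lemma ERle_approx (L M : ER) :
  (forall b b', b < b' -> ERle (Fin b') L -> ERle (Fin b) M) -> ERle L M.
Proof.
  intros H; destruct L as [l | |], M as [m | |]; simpl; auto.
  - apply Rnot_lt_le; intro Hml.
    specialize (H ((m + l) / 2) l ltac:(lra) ltac:(simpl; lra)); simpl in H; lra.
  - exact (H (l - 1) l ltac:(lra) ltac:(simpl; lra)).
  - specialize (H (m + 1) (m + 2) ltac:(lra) I); simpl in H; lra.
  - exact (H 0 1 ltac:(lra) I).
Qed.

Lemma ERsup_image_gt {A : Type} (h : A -> R) (b b' : R) :
  b < b' -> ERle (Fin b') (ERsup (fun w => exists a, w = Fin (h a))) ->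
  exists a, b < h a.
Proof.
  intros Hbb' Hb'; apply NNPP; intro Hnone.
  assert (Hsup : ERle (ERsup (fun w => exists a, w = Fin (h a))) (Fin b)).
  { apply (proj2 (ERsup_spec _)); intros w [a ->]; simpl.
    apply Rnot_lt_le; intro Hlt; apply Hnone; exists a; exact Hlt. }
  pose proof (ERle_trans _ _ _ Hb' Hsup) as Hle; simpl in Hle; lra.
Qed.

Lemma ERinf_image_ge {A : Type} (P : A -> Prop) (h : A -> R) (b : R) :
  (forall a, P a -> b <= h a) ->
  ERle (Fin b) (ERinf (fun w => exists a, P a /\ w = Fin (h a))).
Proof.
  intros Hb; apply (proj2 (ERinf_spec _)); intros w [a [Pa ->]]; exact (Hb a Pa).
Qed.

Lemma ERsup_inf_le_ERinf_sup {A B : Type} (P : A -> Prop) (g : A -> B -> R) :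
  ERle (ERsup (fun v => exists y, v = ERinf (fun w => exists x, P x /\ w = Fin (g x y))))
       (ERinf (fun v => exists x, P x /\ v = ERsup (fun w => exists y, w = Fin (g x y)))).
Proof.
  apply (proj2 (ERsup_spec _)); intros w [y ->].
  apply (proj2 (ERinf_spec _)); intros v [x [Px ->]].
  apply ERle_trans with (Fin (g x y)).
  - apply (proj1 (ERinf_spec _)); exists x; auto.
  - apply (proj1 (ERsup_spec _)); exists y; auto.
Qed.

Lemma Rle_div_iff (a b c : R) : 0 < c -> (a <= b / c <-> a * c <= b).
Proof.
  intros Hc; split; intros H.
  - replace b with (b / c * c) by (field; lra).
    apply Rmult_le_compat_r; lra.
  - replace a with (a * c / c) by (field; lra).
    apply Rmult_le_compat_r; [left; apply Rinv_0_lt_compat; exact Hc | exact H].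
Qed.

Lemma interpolants_both_neg (a0 a1 b0 b1 : R) :
  a0 < 0 <= a1 -> b1 < 0 <= b0 -> a1 * b0 < a0 * b1 ->
  exists s, 0 <= s <= 1 /\ (1 - s) * a0 + s * a1 < 0 /\ (1 - s) * b0 + s * b1 < 0.
Proof.
  intros Ha Hb Hab.
  set (D := (a1 - a0) + (b0 - b1)).
  assert (HD : 0 < D) by (unfold D; lra).
  (* this s makes both interpolants equal to (a1 b0 - a0 b1) / D *)
  exists ((b0 - a0) / D).
  assert (Hval : (a1 * b0 - a0 * b1) / D < 0) by (apply Rdiv_neg_pos; lra).
  assert (Hs : (b0 - a0) / D * D = b0 - a0) by (field; lra).
  split; [| split].
  - split; [apply Rle_div_iff; lra |].
    apply Rmult_le_reg_r with D; [exact HD | rewrite Hs; unfold D; lra].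
  - replace ((1 - (b0 - a0) / D) * a0 + (b0 - a0) / D * a1)
      with ((a1 * b0 - a0 * b1) / D) by (unfold D; field; lra); exact Hval.
  - replace ((1 - (b0 - a0) / D) * b0 + (b0 - a0) / D * b1)
      with ((a1 * b0 - a0 * b1) / D) by (unfold D; field; lra); exact Hval.
Qed.

Section Convexity.
Context {X : LCTVS}.

Lemma convex_on_subset (C K : X -> Prop) (g : X -> R) :
  (forall x, C x -> K x) -> convex_on K g -> convex_on C g.
Proof. intros CK Hg x y t Cx Cy Ht; apply Hg; auto. Qed.

Lemma convex_on_sub_const (C : X -> Prop) (g : X -> R) (b : R) :
  convex_on C g -> convex_on C (fun x => g x - b).
Proof.
  intros Hg x y t Cx Cy Ht; pose proof (Hg x y t Cx Cy Ht); simpl; lra.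
Qed.

Lemma convex_strict_sublevel (C : X -> Prop) (g : X -> R) (b : R) :
  convex_set C -> convex_on C g -> convex_set (fun x => C x /\ g x < b).
Proof.
  intros HC Hg x y t [Cx gx] [Cy gy] Ht; split; [apply HC; auto |].
  pose proof (Hg x y t Cx Cy Ht).
  destruct (Rlt_or_le 0 t); nra.
Qed.

Variables (C : X -> Prop) (P Q : X -> R).
Hypotheses (HC : convex_set C) (HP : convex_on C P) (HQ : convex_on C Q)
  (Hmax : forall x, C x -> P x >= 0 \/ Q x >= 0).

Lemma convex_pair_cross x x' :
  C x -> C x' -> P x < 0 -> Q x' < 0 -> P x * Q x' <= P x' * Q x.
Proof.
  intros Cx Cx' Px Qx'; apply Rnot_lt_le; intro Hlt.
  destruct (interpolants_both_neg (P x) (P x') (Q x) (Q x')) as [s [Hs [HPs HQs]]].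
  - destruct (Hmax x' Cx'); lra.
  - destruct (Hmax x Cx); lra.
  - exact Hlt.
  - pose proof (HP x x' s Cx Cx' Hs); pose proof (HQ x x' s Cx Cx' Hs).
    destruct (Hmax _ (HC x x' s Cx Cx' Hs)); lra.
Qed.

Lemma convex_pair_multiplier x2 :
  C x2 -> Q x2 < 0 -> exists mu, 0 <= mu /\ forall x, C x -> P x + mu * Q x >= 0.
Proof.
  intros C2 Q2.
  assert (Qpos : forall x, C x -> P x < 0 -> Q x > 0).
  { intros x Cx Px; pose proof (convex_pair_cross x x2 Cx C2 Px Q2).
    destruct (Hmax x Cx), (Hmax x2 C2); nra. }
  (* mu will be the largest multiplier forced at points where P < 0 *)
  set (E := fun r => r = 0 \/ exists x, C x /\ P x < 0 /\ P x + r * Q x = 0).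
  assert (Ebound : forall r x', E r -> C x' -> Q x' < 0 -> r * - Q x' <= P x').
  { intros r x' [-> | [x [Cx [Px Hr]]]] Cx' Qx'.
    - destruct (Hmax x' Cx'); lra.
    - pose proof (convex_pair_cross x x' Cx Cx' Px Qx'); pose proof (Qpos x Cx Px); nra. }
  destruct (completeness E) as [mu [Hub Hlub]].
  - exists (P x2 / - Q x2); intros r Er; apply Rle_div_iff; [lra | auto].
  - exists 0; left; reflexivity.
  - exists mu; split; [apply Hub; left; reflexivity |].
    intros x Cx; destruct (Rlt_or_le (P x) 0) as [Px | Px].
    + assert (Hr : E (- P x / Q x)).
      { right; exists x; split; [exact Cx | split; [exact Px |]].
        pose proof (Qpos x Cx Px); field; lra. }
      pose proof (Hub _ Hr); pose proof (Qpos x Cx Px).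
      assert (- P x / Q x * Q x = - P x) by (field; lra); nra.
    + destruct (Rlt_or_le (Q x) 0) as [Qx | Qx].
      * assert (mu * - Q x <= P x); [| lra].
        apply Rle_div_iff; [lra |]; apply Hlub.
        intros r Er; apply Rle_div_iff; [lra | auto].
      * assert (0 <= mu) by (apply Hub; left; reflexivity); nra.
Qed.

Lemma convex_pair_nonneg_combination :
  exists l, 0 <= l <= 1 /\ forall x, C x -> (1 - l) * P x + l * Q x >= 0.
Proof.
  destruct (classic (exists x, C x /\ Q x < 0)) as [[x2 [C2 Q2]] | HQ0].
  - destruct (convex_pair_multiplier x2 C2 Q2) as [mu [Hmu Hcomb]].
    assert (Hinv : 0 < / (1 + mu)) by (apply Rinv_0_lt_compat; lra).
    assert (Hprod : mu * / (1 + mu) = 1 - / (1 + mu)) by (field; lra).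
    exists (mu * / (1 + mu)); split; [nra |].
    intros x Cx.
    replace ((1 - mu * / (1 + mu)) * P x + mu * / (1 + mu) * Q x)
      with ((P x + mu * Q x) * / (1 + mu)) by (field; lra).
    pose proof (Hcomb x Cx); nra.
  - exists 1; split; [lra |]; intros x Cx.
    destruct (Rlt_or_le (Q x) 0); [exfalso; eauto | lra].
Qed.

End Convexity.

Section Minimax.
Context {X : LCTVS} (K : X -> Prop) {Y : Type} (f : X -> Y -> R).

Lemma concavelike_finite_minorant (b : R) :
  inhabited Y ->
  (forall y, convex_on K (fun x => f x y)) ->
  (forall y1 y2 t, 0 <= t <= 1 -> exists y3, forall x, K x ->
      f x y3 >= (1 - t) * f x y1 + t * f x y2) ->
  forall (l : list Y) (C : X -> Prop), (forall x, C x -> K x) -> convex_set C ->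
  (forall x, C x -> exists y, In y l /\ b <= f x y) ->
  exists y0, forall x, C x -> b <= f x y0.
Proof.
  intros [yY] hconv hconc l; induction l as [| a l IH]; intros C CK HC Hcov.
  - exists yY; intros x Cx; destruct (Hcov x Cx) as [y [[] _]].
  - assert (hconvC : forall y, convex_on C (fun x => f x y - b)).
    { intros y; apply convex_on_sub_const, (convex_on_subset C K); auto. }
    destruct (IH (fun x => C x /\ f x a < b)) as [y' Hy'].
    + intros x [Cx _]; auto.
    + apply convex_strict_sublevel; [exact HC |].
      apply (convex_on_subset C K); auto.
    + intros x [Cx Fx]; destruct (Hcov x Cx) as [y [[<- | Iy] Fy]]; [lra | eauto].
    + destruct (convex_pair_nonneg_combination C (fun x => f x y' - b) (fun x => f x a - b)
                  HC (hconvC y') (hconvC a)) as [lam [Hlam Hcomb]].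
      { intros x Cx; destruct (Rlt_or_le (f x a) b) as [Fx | Fx].
        - left; pose proof (Hy' x (conj Cx Fx)); lra.
        - right; lra. }
      destruct (hconc y' a lam Hlam) as [y3 H3]; exists y3; intros x Cx.
      pose proof (H3 x (CK x Cx)); pose proof (Hcomb x Cx); simpl in *; lra.
Qed.

Lemma compact_finite_witnesses (P : Y -> X -> Prop) :
  compact_set K ->
  (forall x, K x -> exists y V, is_open V /\ V x /\ forall z, V z -> K z -> P y z) ->
  exists l : list Y, forall x, K x -> exists y, In y l /\ P y x.
Proof.
  intros HK Hloc.
  set (I := {p : Y * (X -> Prop) | is_open (snd p) /\ forall z, snd p z -> K z -> P (fst p) z}).
  destruct (HK I (fun i => snd (proj1_sig i))) as [l Hl].
  - intro i; exact (proj1 (proj2_sig i)).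
  - intros x Kx; destruct (Hloc x Kx) as [y [V [HV [Vx HPV]]]].
    exists (exist _ (y, V) (conj HV HPV)); exact Vx.
  - exists (map (fun i : I => fst (proj1_sig i)) l); intros x Kx.
    destruct (Hl x Kx) as [i [Ii Vi]]; exists (fst (proj1_sig i)); split.
    + exact (in_map (fun i : I => fst (proj1_sig i)) l i Ii).
    + exact (proj2 (proj2_sig i) x Vi Kx).
Qed.

Hypothesis heq : equicontinuous_on K f.

Lemma equicontinuous_gt_nbhd x y b :
  K x -> b < f x y -> exists V, is_open V /\ V x /\ forall z, V z -> K z -> b < f z y.
Proof.
  intros Kx Hb; destruct (heq x (f x y - b) Kx ltac:(lra)) as [V [HV [Vx Hclose]]].
  exists V; split; [exact HV | split; [exact Vx |]].
  intros z Vz Kz; pose proof (Rabs_def2 _ _ (Hclose z y Vz Kz)); lra.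
Qed.

Lemma equicontinuous_dense_gt (U : X -> Prop) (b c : R) :
  dense_in U K -> b < c -> (forall u, U u -> exists y, c < f u y) ->
  forall x, K x -> exists y, b < f x y.
Proof.
  intros [UK Hdense] Hbc HU x Kx.
  destruct (heq x (c - b) Kx ltac:(lra)) as [V [HV [Vx Hclose]]].
  destruct (Hdense V HV (ex_intro _ x (conj Kx Vx))) as [u [Uu Vu]].
  destruct (HU u Uu) as [y Hy]; exists y.
  pose proof (Rabs_def2 _ _ (Hclose u y Vu (UK u Uu))); lra.
Qed.

Lemma uniform_minorant (U : X -> Prop) (b c : R) :
  inhabited Y -> compact_set K -> convex_set K -> dense_in U K ->
  (forall y, convex_on K (fun x => f x y)) ->
  (forall y1 y2 t, 0 <= t <= 1 -> exists y3, forall x, K x ->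
      f x y3 >= (1 - t) * f x y1 + t * f x y2) ->
  b < c -> (forall u, U u -> exists y, c < f u y) ->
  exists y0, forall x, K x -> b <= f x y0.
Proof.
  intros hYne hKc hKcv hU hconv hconc Hbc HU.
  destruct (compact_finite_witnesses (fun y x => b < f x y) hKc) as [l Hl].
  { intros x Kx; destruct (equicontinuous_dense_gt U b c hU Hbc HU x Kx) as [y Hy].
    exists y; exact (equicontinuous_gt_nbhd x y b Kx Hy). }
  apply (concavelike_finite_minorant b hYne hconv hconc l K); auto.
  intros x Kx; destruct (Hl x Kx) as [y [Iy Hy]]; exists y; split; [exact Iy | lra].
Qed.

End Minimax.

Theorem mainTheorem15 (X : LCTVS) (K U : X -> Prop) (Y : Type) (f : X -> Y -> R)
  (hKne : exists x, K x) (hKc : compact_set K) (hKcv : convex_set K)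
  (hYne : inhabited Y) (hU : dense_in U K)
  (hconv : forall y, convex_on K (fun x => f x y))
  (hconc : forall y1 y2 t, 0 <= t <= 1 -> exists y3, forall x, K x ->
      f x y3 >= (1 - t) * f x y1 + t * f x y2)
  (heq : equicontinuous_on K f)
  (hbd : forall x, K x -> exists M, forall y, f x y <= M) :
  ERinf (fun v => exists x, U x /\ v = ERsup (fun w => exists y, w = Fin (f x y)))
  = ERsup (fun v => exists y, v = ERinf (fun w => exists x, U x /\ w = Fin (f x y))).
Proof.
  apply ERle_antisym; [| apply ERsup_inf_le_ERinf_sup].
  apply ERle_approx; intros b b' Hbb' Hb'.
  destruct (uniform_minorant K f heq U b ((b + b') / 2) hYne hKc hKcv hU hconv hconc)
    as [y0 Hy0]; [lra | |].
  - intros u Uu; apply (ERsup_image_gt (f u) _ b'); [lra |].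
    apply ERle_trans with (1 := Hb'), (proj1 (ERinf_spec _)); exists u; auto.
  - apply ERle_trans with (ERinf (fun w => exists x, U x /\ w = Fin (f x y0))).
    + apply ERinf_image_ge; intros x Ux; apply Hy0, (proj1 hU), Ux.
    + apply (proj1 (ERsup_spec _)); exists y0; reflexivity.
Qed.
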